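(* Let $\mathcal H$ be the $5$-uniform hypergraph defined below. Then $\mathcal{H}\setminus\{z\}$ has a fast winning strategy; that is, in the game in which FP and SP alternately claim previously unclaimed edges of $K^5_{\mathbb{N}}$ (FP first), SP has a strategy ensuring that after his seventh move his claimed edges contain a copy of $\mathcal{H}\setminus\{z\}$, regardless of FP's moves.
   Context: $\mathcal{H}$ has vertex set $\{z, v_1,\dots,v_9\}$ and edges $r=\{z,v_1,v_3,v_5,v_8\}$, $g=\{z,v_2,v_4,v_7,v_9\}$, $a=\{v_1,v_4,v_6,v_8,v_9\}$, $b=\{v_9,v_1,v_2,v_3,v_4\}$, and $e_i=\{v_i,v_{i+1},v_{i+2},v_{i+3},v_{i+4}\}$ for $i=1,\dots,5$. $\mathcal{H}\setminus\{z\}$ is obtained by deleting $z$ and the edges $r,g$; it has $7$ edges. $K^5_{\mathbb N}$ is the complete $5$-uniform hypergraph on $\mathbb N$; a copy is a subhypergraph isomorphic to the given one. *)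

From HB Require Import structures.
From mathcomp Require Import all_boot finmap.
Set Implicit Arguments. Unset Strict Implicit. Unset Printing Implicit Defensive.
Local Open Scope fset_scope.

(* Vertices of H: z is encoded as 0 and v_i as i (1 <= i <= 9). *)
Definition zv : nat := 0.

Definition e_ (i : nat) : seq nat := iota i 5.

Definition H_edges : seq (seq nat) :=
  [:: [:: zv; 1; 3; 5; 8]
   ;  [:: zv; 2; 4; 7; 9]
   ;  [:: 1; 4; 6; 8; 9]
   ;  [:: 9; 1; 2; 3; 4]
   ;  e_ 1; e_ 2; e_ 3; e_ 4; e_ 5].

Definition H_vertices : seq nat := iota 0 10.

Definition Hz_edges : seq (seq nat) := [seq e <- H_edges | zv \notin e].
Definition Hz_vertices : seq nat := [seq v <- H_vertices | v != zv].

Definition edge5 (e : {fset nat}) : bool := #|` e| == 5.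

Definition has_copy_Hz (F : seq {fset nat}) : Prop :=
  exists phi : nat -> nat,
    {in Hz_vertices &, injective phi} /\
    forall e, e \in Hz_edges -> [fset phi x | x in e] \in F.

(* A strategy for SP: given the history of all moves so far
   (FP's and SP's alternately, FP first, ending with FP's latest move),
   it returns SP's next edge. *)
Definition strategy := seq {fset nat} -> {fset nat}.

(* FP's moves are given by fp : nat -> {fset nat} (fp k = FP's (k+1)-th
   move). history sigma fp k = the sequence of the first 2k moves. *)
Fixpoint history (sigma : strategy) (fp : nat -> {fset nat}) (k : nat)
  : seq {fset nat} :=
  match k with
  | 0 => [::]
  | k'.+1 =>
      let h := history sigma fp k' in
      h ++ [:: fp k'; sigma (rcons h (fp k'))]
  end.

Definition sp_edges (sigma : strategy) (fp : nat -> {fset nat}) (k : nat)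
  : seq {fset nat} :=
  [seq sigma (rcons (history sigma fp i) (fp i)) | i <- iota 0 k].

Definition fp_legal (sigma : strategy) (fp : nat -> {fset nat}) (n : nat) : Prop :=
  forall k, k < n -> edge5 (fp k) /\ fp k \notin history sigma fp k.

Definition sp_legal (sigma : strategy) (fp : nat -> {fset nat}) (n : nat) : Prop :=
  forall k, k < n ->
    let s := sigma (rcons (history sigma fp k) (fp k)) in
    edge5 s /\ s \notin rcons (history sigma fp k) (fp k).

Definition sp_builds_Hz_in (n : nat) : Prop :=
  exists sigma : strategy,
    forall fp : nat -> {fset nat},
      fp_legal sigma fp n ->
      sp_legal sigma fp n /\ has_copy_Hz (sp_edges sigma fp n).

From mathcomp Require Import all_boot finmap zify.
Set Implicit Arguments. Unset Strict Implicit. Unset Printing Implicit Defensive.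
Local Open Scope fset_scope.
Local Open Scope nat_scope.

(* SP plays five opening edges on nine labels 0..8, every label standing for
   a vertex larger than all vertices claimed before it is introduced, so FP
   cannot have claimed any of these edges in advance.  The opening extends to
   a copy of H \ {z} by each of the pairs {X, Z1}, {X, Z2}, {Y, W1}, {Y, W2}.
   These six edges all contain label 8, which is introduced only after FP's
   fifth move, so only FP's sixth and seventh moves can interfere: if the
   sixth one takes X, Z1 or Z2, SP answers Y and then the free one of W1, W2;
   otherwise X and then the free one of Z1, Z2. *)

Lemma uniq_map_inj_in (T1 T2 : eqType) (f : T1 -> T2) (s : seq T1) :
  uniq (map f s) -> {in s &, injective f}.
Proof.
move=> uniq_fs x y xs ys fxy; rewrite -(nth_index x xs) -(nth_index x ys).
congr nth; apply: (uniqP (f x) uniq_fs); rewrite ?inE /= ?size_map ?index_mem //.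
by rewrite !(nth_map x) ?index_mem // !nth_index.
Qed.

Section LabelImage.
Variables (V : nat -> nat) (P : pred nat).
Hypothesis V_inj : {in P &, injective V}.

Definition vimg (A : seq nat) : {fset nat} := [fset V i | i in A].

Lemma vimg_perm A B : perm_eq A B -> vimg A = vimg B.
Proof. by move=> /perm_mem AB; apply: eq_imfset. Qed.

Lemma eq_vimg A B : all P A -> all P B -> uniq A -> uniq B ->
  (vimg A == vimg B) = perm_eq A B.
Proof.
move=> /allP PA /allP PB uA uB; apply/eqP/idP => [AB|/vimg_perm //].
have sub A' B' : {subset A' <= P} -> {subset B' <= P} -> vimg A' = vimg B' ->
    {subset A' <= B'}.
  move=> PA' PB' E i iA; have /imfsetP[j jB Vij] : V i \in vimg B'.
    by rewrite -E in_imfset.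
  by rewrite (V_inj (PA' _ iA) (PB' _ jB) Vij).
by apply: uniq_perm => // i; apply/idP/idP; apply: sub.
Qed.

Lemma card_vimg A : all P A -> uniq A -> #|` vimg A| = size A.
Proof.
move=> /allP PA uA; rewrite card_in_imfset => [|i j /PA Pi /PA Pj]; last exact: V_inj.
apply: perm_size; apply: uniq_perm => //; first exact: enum_finmem_uniq.
by move=> i; rewrite enum_finmemE.
Qed.

Lemma has_copy_Hz_vimg (As : seq (seq nat)) (c : nat -> nat) :
  all P (map c Hz_vertices) -> uniq (map c Hz_vertices) ->
  all (fun e => has (perm_eq (map c e)) As) Hz_edges ->
  has_copy_Hz (map vimg As).
Proof.
move=> /allP Pc /uniq_map_inj_in c_inj /allP cover.
exists (V \o c); split.
  move=> x y xH yH Vcxy; apply: c_inj => //.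
  by apply: V_inj Vcxy; apply: Pc; apply: map_f.
move=> e eH; have /hasP[A AAs cA] := cover e eH.
have -> : [fset (V \o c) x | x in e] = vimg (map c e).
  apply/fsetP => x; apply/imfsetP/imfsetP => [[y ye ->]|[i /mapP[y ye ->] ->]].
    by exists (c y) => //; apply: map_f.
  by exists y.
by rewrite (vimg_perm cA) map_f.
Qed.

End LabelImage.

Section History.
Variables (sigma : strategy) (fp : nat -> {fset nat}).

Definition position (r : nat) : seq {fset nat} := rcons (history sigma fp r) (fp r).

Lemma size_history r : size (history sigma fp r) = r.*2.
Proof. by elim: r => //= r IH; rewrite size_cat IH /= addn2. Qed.

Lemma position_succ r :
  position r.+1 = position r ++ [:: sigma (position r); fp r.+1].
Proof. by rewrite /position /= rcons_cat cat_rcons. Qed.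

Lemma size_position r : size (position r) = r.*2.+1.
Proof. by rewrite size_rcons size_history. Qed.

Lemma half_size_position r : (size (position r))./2 = r.
Proof. by rewrite size_position /= uphalf_double. Qed.

Lemma take_position r d : take r.*2.+1 (position (r + d)) = position r.
Proof.
elim: d => [|d IH]; first by rewrite addn0 take_oversize // size_position.
by rewrite addnS position_succ takel_cat ?size_position ?ltnS ?leq_double ?leq_addr.
Qed.

Lemma mem_position_succ r x : (x \in position r.+1) =
  [|| x == fp r.+1, x \in position r | x == sigma (position r)].
Proof.
rewrite position_succ mem_cat !inE.
by case: (x == fp r.+1); case: (x \in position r); case: (x == sigma _).
Qed.

Lemma answer_in_position r : sigma (position r) \in position r.+1.
Proof. by rewrite mem_position_succ eqxx !orbT. Qed.

End History.

Definition fresh (l : seq {fset nat}) : nat := (\max_(S <- l) \max_(x <- S) x).+1.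

Lemma fresh_gt (l : seq {fset nat}) (S : {fset nat}) (x : nat) :
  S \in l -> x \in S -> x < fresh l.
Proof.
move=> Sl xS; rewrite ltnS; apply: leq_trans (leq_bigmax_seq S Sl isT).
exact: (leq_bigmax_seq x xS).
Qed.

Lemma fresh_notin (l : seq {fset nat}) (S : {fset nat}) (x : nat) :
  fresh l <= x -> x \in S -> S \notin l.
Proof. by move=> lx xS; apply/negP => /fresh_gt/(_ xS); rewrite ltnNge lx. Qed.

Definition pick_free (T : eqType) (h : seq T) (B1 B2 : T) : T :=
  if B1 \in h then B2 else B1.

Lemma pick_free_notin (T : eqType) (h : seq T) (f B1 B2 : T) :
  B1 != B2 -> (B1 \in h) = (B1 == f) -> (B2 \in h) = (B2 == f) ->
  pick_free h B1 B2 \notin h.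
Proof.
rewrite /pick_free => B12 B1h B2h; rewrite B1h.
case: eqP => [B1f|B1f] /=; first by rewrite B2h -B1f eq_sym.
by rewrite B1h; apply/eqP.
Qed.

Definition fresh_after (h : seq {fset nat}) (k : nat) : nat := fresh (take k.*2.+1 h).

(* Labels 0..4 are the five vertices following FP's first move; label k + 4
   (1 <= k <= 4) is the first vertex above everything claimed up to FP's
   (k + 1)-th move. *)
Definition label (h : seq {fset nat}) (i : nat) : nat :=
  if i < 5 then fresh_after h 0 + i else fresh_after h (i - 4).

Definition opening : seq (seq nat) :=
  [:: [:: 0; 1; 2; 3; 4]; [:: 0; 1; 2; 3; 5]; [:: 0; 1; 2; 4; 6];
      [:: 0; 1; 3; 5; 7]; [:: 0; 2; 4; 6; 8]].

Definition X : seq nat := [:: 1; 3; 5; 7; 8].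
Definition Z1 : seq nat := [:: 0; 3; 6; 7; 8].
Definition Z2 : seq nat := [:: 1; 2; 6; 7; 8].
Definition Y : seq nat := [:: 2; 4; 6; 7; 8].
Definition W1 : seq nat := [:: 0; 4; 5; 7; 8].
Definition W2 : seq nat := [:: 1; 2; 5; 7; 8].

(* Label sets that none of FP's first five moves can have claimed. *)
Definition late (A : seq nat) : bool :=
  [&& 8 \in A, all (gtn 9) A, uniq A & ~~ perm_eq A (nth [::] opening 4)].

Definition X_blocked (h : seq {fset nat}) : bool :=
  has (fun A => vimg (label h) A \in h) [:: X; Z1; Z2].

Definition sp_move (r : nat) (h : seq {fset nat}) : {fset nat} :=
  if r < 5 then vimg (label h) (nth [::] opening r)
  else if r == 5 then
    (if X_blocked h then vimg (label h) Y else vimg (label h) X)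
  else if r == 6 then
    (if X_blocked (take 11 h) (* the position SP faced in round 5 *)
     then pick_free h (vimg (label h) W1) (vimg (label h) W2)
     else pick_free h (vimg (label h) Z1) (vimg (label h) Z2))
  else fset0.

Definition sp_strategy : strategy := fun h => sp_move (size h)./2 h.

Definition labelling (L : seq nat) (v : nat) : nat := nth 0 L v.-1.

Section Play.
Variable fp : nat -> {fset nat}.
Local Notation pos := (position sp_strategy fp).
Local Notation answer r := (sp_strategy (pos r)).

Definition vertex (i : nat) : nat :=
  if i < 5 then fresh (pos 0) + i else fresh (pos (i - 4)).

Lemma label_position r i : i <= r + 4 -> label (pos r) i = vertex i.
Proof.
rewrite /label /vertex /fresh_after; case: ifP => [_ _|i5 ir].
  by rewrite -(take_position _ _ 0 r).
have -> : r = (i - 4) + (r - (i - 4)) by lia.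
by rewrite take_position.
Qed.

Lemma vimg_position r A :
  all (fun i => i <= r + 4) A -> vimg (label (pos r)) A = vimg vertex A.
Proof. by move=> /allP Ar; apply: eq_in_imfset => i /Ar /label_position. Qed.

Lemma answer_round r : answer r = sp_move r (pos r).
Proof. exact: (congr1 (sp_move^~ (pos r)) (half_size_position _ _ r)). Qed.

Lemma answer_opening r : r < 5 -> answer r = vimg vertex (nth [::] opening r).
Proof.
move=> r5; rewrite answer_round /sp_move r5 vimg_position //.
by case: r r5 => [|[|[|[|[|]]]]].
Qed.

Lemma newest_vertex_in_answer r : r < 5 -> vertex (r + 4) \in answer r.
Proof. by move=> r5; rewrite answer_opening // in_imfset //; case: r r5 => [|[|[|[|[|]]]]]. Qed.

Lemma fresh_le_vertex r : fresh (pos r) <= vertex (r + 4).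
Proof.
rewrite /vertex addnK; case: r => [|r] /=; first exact: leq_addr.
by rewrite ifF //; lia.
Qed.

Lemma vertex_lt_fresh r : r < 5 -> vertex (r + 4) < fresh (pos r.+1).
Proof.
by move=> r5; apply: fresh_gt (answer_in_position _ _ r) (newest_vertex_in_answer r5).
Qed.

Lemma vertex_inj : {in gtn 9 &, injective vertex}.
Proof.
have vertex_incr i : i < 8 -> vertex i < vertex i.+1.
  move=> i8; case: (ltnP i 4) => [i4|].
    rewrite /vertex ifT; last by lia.
    by rewrite ifT ?ltn_add2l //; lia.
  move=> /subnK <-; apply: leq_trans (vertex_lt_fresh _) _; first by lia.
  by rewrite -addSn fresh_le_vertex.
apply: incn_inj_in; apply: leq_mono_in; apply: homo_ltn_in.
- exact: ltn_trans.
- by move=> i j _ j9 k /andP[_ kj]; apply: ltn_trans kj j9.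
- by move=> i _ i1; apply: vertex_incr.
Qed.

Lemma eq_vimg_vertex A B : all (gtn 9) A -> all (gtn 9) B -> uniq A -> uniq B ->
  (vimg vertex A == vimg vertex B) = perm_eq A B.
Proof. exact: (eq_vimg (P := gtn 9) vertex_inj). Qed.

Lemma edge5_vimg A : all (gtn 9) A -> uniq A -> size A = 5 -> edge5 (vimg vertex A).
Proof. by move=> A9 uA A5; rewrite /edge5 (card_vimg vertex_inj) // A5. Qed.

Lemma answer_opening_notin r : r < 5 -> answer r \notin pos r.
Proof.
by move=> r5; apply: fresh_notin (fresh_le_vertex r) (newest_vertex_in_answer r5).
Qed.

Lemma mem_pos5 A : late A -> (vimg vertex A \in pos 5) = (vimg vertex A == fp 5).
Proof.
case/and4P=> A8 A9 uA notE5; rewrite mem_position_succ answer_opening //.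
rewrite eq_vimg_vertex // (negbTE notE5) orbF.
by rewrite (negbTE (fresh_notin (fresh_le_vertex 4) (in_imfset _ _ A8))) orbF.
Qed.

Lemma X_blocked_pos5 :
  X_blocked (pos 5) = has (fun A => vimg vertex A == fp 5) [:: X; Z1; Z2].
Proof. by rewrite /X_blocked /= !vimg_position // !mem_pos5. Qed.

Lemma answer_round5 :
  answer 5 = if X_blocked (pos 5) then vimg vertex Y else vimg vertex X.
Proof. by rewrite answer_round /sp_move !vimg_position. Qed.

Lemma answer_round6 :
  answer 6 = if X_blocked (pos 5)
             then pick_free (pos 6) (vimg vertex W1) (vimg vertex W2)
             else pick_free (pos 6) (vimg vertex Z1) (vimg vertex Z2).
Proof.
rewrite answer_round /sp_move.
have -> : take 11 (pos 6) = pos 5 := take_position _ _ 5 1.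
by rewrite !vimg_position.
Qed.

Lemma blocked_ne_fp5 A : X_blocked (pos 5) -> all (gtn 9) A -> uniq A ->
  ~~ has (perm_eq A) [:: X; Z1; Z2] -> vimg vertex A != fp 5.
Proof.
rewrite X_blocked_pos5 => /hasP[B BXZ /eqP <-] A9 uA notXZ.
move: BXZ notXZ; rewrite !inE => /or3P[]/eqP->;
  by rewrite eq_vimg_vertex //; apply: contra => AB; rewrite /= AB ?orbT.
Qed.

Lemma answer_round5_notin : answer 5 \notin pos 5.
Proof.
rewrite answer_round5; case: ifP => blocked; rewrite mem_pos5 //.
  exact: blocked_ne_fp5.
by move: blocked; rewrite X_blocked_pos5 /= => /norP[].
Qed.

Lemma mem_pos6 A : late A -> vimg vertex A != fp 5 ->
  ~~ perm_eq A (if X_blocked (pos 5) then Y else X) ->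
  (vimg vertex A \in pos 6) = (vimg vertex A == fp 6).
Proof.
move=> lateA notfp5 notans5; have /and4P[_ A9 uA _] := lateA.
rewrite mem_position_succ mem_pos5 // (negbTE notfp5) answer_round5.
by case: ifP notans5 => _ notans5; rewrite eq_vimg_vertex // (negbTE notans5) !orbF.
Qed.

Lemma answer_round6_notin : answer 6 \notin pos 6.
Proof.
rewrite answer_round6; case: ifP => blocked.
  apply: (pick_free_notin (f := fp 6)); rewrite ?eq_vimg_vertex //;
    by rewrite mem_pos6 ?blocked //; apply: blocked_ne_fp5.
have [notZ1 notZ2] : vimg vertex Z1 != fp 5 /\ vimg vertex Z2 != fp 5.
  by move: blocked; rewrite X_blocked_pos5 /= => /norP[_ /norP[-> /norP[-> _]]].
apply: (pick_free_notin (f := fp 6)); rewrite ?eq_vimg_vertex //;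
  by rewrite mem_pos6 ?blocked.
Qed.

Lemma edge5_answer r : r < 7 -> edge5 (answer r).
Proof.
move=> r7; case: (ltnP r 5) => r5.
  rewrite answer_opening //; apply: edge5_vimg; by case: r r5 {r7} => [|[|[|[|[|]]]]].
have [->|->] : r = 5 \/ r = 6 by lia.
  by rewrite answer_round5; case: ifP => _; apply: edge5_vimg.
by rewrite answer_round6 /pick_free; do 2 case: ifP => _; apply: edge5_vimg.
Qed.

Lemma answer_notin r : r < 7 -> answer r \notin pos r.
Proof.
move=> r7; case: (ltnP r 5) => r5; first exact: answer_opening_notin.
have [->|->] : r = 5 \/ r = 6 by lia.
  exact: answer_round5_notin.
exact: answer_round6_notin.
Qed.

Lemma sp_strategy_legal : sp_legal sp_strategy fp 7.
Proof. by move=> r r7; split; [exact: edge5_answer | exact: answer_notin]. Qed.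

Lemma sp_edges_strategy :
  sp_edges sp_strategy fp 7 = map (vimg vertex) opening ++ [:: answer 5; answer 6].
Proof.
change (sp_edges sp_strategy fp 7) with
  [:: answer 0; answer 1; answer 2; answer 3; answer 4; answer 5; answer 6].
by do 5 rewrite answer_opening //.
Qed.

Lemma sp_strategy_builds_copy : has_copy_Hz (sp_edges sp_strategy fp 7).
Proof.
rewrite sp_edges_strategy answer_round5 answer_round6 /pick_free.
case: ifP => _; case: ifP => _.
- by apply: (has_copy_Hz_vimg vertex_inj (As := opening ++ [:: Y; W2])
    (c := labelling [:: 8; 6; 4; 2; 0; 1; 3; 5; 7])).
- by apply: (has_copy_Hz_vimg vertex_inj (As := opening ++ [:: Y; W1])
    (c := labelling [:: 5; 3; 1; 0; 2; 4; 6; 8; 7])).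
- by apply: (has_copy_Hz_vimg vertex_inj (As := opening ++ [:: X; Z2])
    (c := labelling [:: 7; 5; 3; 1; 0; 2; 4; 6; 8])).
- by apply: (has_copy_Hz_vimg vertex_inj (As := opening ++ [:: X; Z1])
    (c := labelling [:: 6; 4; 2; 0; 1; 3; 5; 7; 8])).
Qed.

End Play.

Theorem lemma4p1 : sp_builds_Hz_in 7.
Proof.
exists sp_strategy => fp _; split; [exact: sp_strategy_legal | exact: sp_strategy_builds_copy].
Qed.
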